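(* Let $m\ge 2$ and let $F_m$ be the free group with basis $a_1,\dots,a_m$. Define $$\Delta_{F_m}(\mathbf z)=\sum_{g\in F_m} z_1^{|g|_{a_1^{\epsilon}}}\cdots z_m^{|g|_{a_m^{\epsilon}}},\qquad \mathbf z=(z_1,\dots,z_m),$$ where $|g|_{a_i^{\epsilon}}=|g|_{a_i}+|g|_{a_i^{-1}}$ is the total number of occurrences of $a_i$ and $a_i^{-1}$ in the freely reduced word representing $g$. Then $$\Delta_{F_m}(\mathbf z)=\frac{(1+z_1)\cdots(1+z_m)}{R(\mathbf z)},\qquad R(\mathbf z)=1-\sum_{l=1}^{m}(2l-1)\sum_{1\le i_1<\dots<i_l\le m} z_{i_1}\cdots z_{i_l}.$$
   Context: Identity of formal power series in $z_1,\dots,z_m$ (equivalently, of analytic functions near $\mathbf 0$). *)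

From HB Require Import structures.
From mathcomp Require Import all_boot all_order all_algebra.
Set Implicit Arguments. Unset Strict Implicit. Unset Printing Implicit Defensive.
Import GRing.Theory Num.Theory.
Local Open Scope ring_scope.

Definition multi (m : nat) := {ffun 'I_m -> nat}.
Definition mdeg m (k : multi m) : nat := (\sum_(i < m) k i)%N.

Definition fps (m : nat) := multi m -> int.

Definition fps_zero (m : nat) : fps m := fun _ => 0.
Definition fps_add m (f g : fps m) : fps m := fun k => f k + g k.
Definition fps_scale m (c : int) (f : fps m) : fps m := fun k => c * f k.
(* Cauchy product: (fg)_k = sum_{j <= k} f_j g_{k-j}; each j_i <= k_i <= mdeg k *)
Definition fps_mul m (f g : fps m) : fps m := fun k =>
  \sum_(j : {ffun 'I_m -> 'I_(mdeg k).+1} | [forall i, (j i <= k i)%N])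
     f [ffun i => (j i : nat)] * g [ffun i => (k i - j i)%N].
Definition fps_mono m (e : multi m) : fps m := fun k => (k == e)%:R.
Definition fps_one m : fps m := @fps_mono m [ffun _ => 0%N].
Arguments fps_one m : clear implicits.
Arguments fps_zero m : clear implicits.
Definition fps_var m (i : 'I_m) : fps m := fps_mono [ffun j => nat_of_bool (j == i)].

Definition numer m : fps m :=
  \big[@fps_mul m/fps_one m]_(i < m) @fps_add m (fps_one m) (@fps_var m i).

Definition R_series m : fps m :=
  @fps_add m (fps_one m)
   (@fps_scale m (-1)
     (\big[@fps_add m/fps_zero m]_(1 <= l < m.+1)
        @fps_scale m ((2 * l - 1)%N)%:R
          (\big[@fps_add m/fps_zero m]_(S : {set 'I_m} | #|S| == l)
              \big[@fps_mul m/fps_one m]_(i in S) @fps_var m i))).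

(* Free group F_m modelled by its normal forms: freely reduced words over the
   letters a_i^{+1} = (i, false), a_i^{-1} = (i, true). *)
Definition letter (m : nat) := ('I_m * bool)%type.
Fixpoint reduced m (w : seq (letter m)) : bool :=
  match w with
  | x :: ((y :: _) as t) => ~~ ((x.1 == y.1) && (x.2 != y.2)) && reduced t
  | _ => true
  end.
Definition occ m (i : 'I_m) (w : seq (letter m)) : nat := count (fun x => x.1 == i) w.

(* Delta_{F_m}: coefficient of z^k = number of g in F_m with (|g|_{a_i^eps})_i = k;
   such reduced words have length mdeg k. *)
Definition Delta m : fps m := fun k =>
  (#|[set w : (mdeg k).-tuple (letter m) |
        reduced (tval w) && [forall i, occ i (tval w) == k i]]|)%:R.
Arguments Delta m : clear implicits.
Arguments R_series m : clear implicits.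
Arguments numer m : clear implicits.

From mathcomp Require Import all_boot all_order all_algebra.
From mathcomp Require Import ring zify.
Set Implicit Arguments. Unset Strict Implicit. Unset Printing Implicit Defensive.
Import GRing.Theory.

(* Write D(k) for the number of reduced words whose letter-count vector is k,
   and E_i(k) for those among them beginning with a_i or a_i^-1, so that
   Delta = sum_k D(k) z^k.  Splitting off the first letter gives
   D(k) = [k = 0] + sum_i E_i(k) and, since a_i^(+-1) can be put in front of a
   reduced word in two ways unless the word starts with a_i^(-+1),
   E_i(k) + E_i(k - e_i) = 2 D(k - e_i) whenever k_i > 0.
   The coefficients of R live on the squarefree monomials z^(1_S), where they
   equal 1 - 2|S|, so the coefficient of z^k in Delta R is
   sum_(S <= supp k) (1 - 2|S|) D(k - 1_S).  Pairing each S not containing i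
   with S + {i} in the second recursion shows
   sum_S 2|S| D(k - 1_S) = sum_S sum_i E_i(k - 1_S), so by the first recursion
   the whole sum collapses to sum_(S <= supp k) [k = 1_S], which is 1 exactly
   when k is squarefree: the coefficient of z^k in (1 + z_1) ... (1 + z_m). *)

Section MultiIndices.
Variable m : nat.
Implicit Types (k a b : multi m) (S T : {set 'I_m}) (i : 'I_m).

Definition mzero : multi m := [ffun _ => 0].
Definition munit i : multi m := [ffun j => nat_of_bool (j == i)].
Definition mind S : multi m := [ffun j => nat_of_bool (j \in S)].
Definition msub k a : multi m := [ffun i => k i - a i].
Definition mle a k := [forall i, a i <= k i].
Definition msupp k : {set 'I_m} := [set i | 0 < k i].
Definition sqfree k := [forall i, k i <= 1].

Lemma eq_multiE a b : (a == b) = [forall i, a i == b i].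
Proof. by apply/eqP/forallP => [-> //|eq_ab]; apply/ffunP => i; apply/eqP. Qed.

Lemma forall_split_at i (P Q : pred 'I_m) : {in predC1 i, P =1 Q} ->
  [forall j, P j] = P i && [forall j, (j != i) ==> Q j].
Proof.
move=> PQ; apply/forallP/andP => [Pj|[Pi /forallP Qj] j].
  by split => //; apply/forallP => j; apply/implyP => ji; rewrite -PQ.
by have [->|ji] := eqVneq j i; rewrite // PQ //; apply: (implyP (Qj j)).
Qed.

Lemma leq_mdeg k i : k i <= mdeg k.
Proof. by rewrite /mdeg (bigD1 i) //= leq_addr. Qed.

Lemma mdeg_eq0 k : (mdeg k == 0) = (k == mzero).
Proof.
rewrite /mdeg sum_nat_eq0 eq_multiE.
by apply: eq_forallb => i; rewrite ffunE.
Qed.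

Lemma mdeg_msub_unit k i : 0 < k i -> mdeg k = (mdeg (msub k (munit i))).+1.
Proof.
move=> ki; rewrite /mdeg (bigD1 i) //= [in RHS](bigD1 i) //= !ffunE eqxx subn1.
rewrite -addSn prednK //; congr addn; apply: eq_bigr => j /negbTE ji.
by rewrite !ffunE ji subn0.
Qed.

Lemma mle_unit k i : mle (munit i) k = (0 < k i).
Proof.
rewrite /mle (forall_split_at (i := i) (Q := xpredT)) ?ffunE ?eqxx; last first.
  by move=> j /negbTE ji; rewrite ffunE ji.
suff -> : [forall j, (j != i) ==> true] by rewrite andbT.
by apply/forallP => j; rewrite implybT.
Qed.

Lemma msub_indU1 k T i : i \notin T ->
  msub (msub k (mind T)) (munit i) = msub k (mind (i |: T)).
Proof.
move=> iT; apply/ffunP => j; rewrite !ffunE in_setU1 -subnDA.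
by have [->|] := eqVneq j i; rewrite ?(negbTE iT) ?addn0 ?add0n.
Qed.

Lemma msub_ind_notin k T i : i \notin T -> msub k (mind T) i = k i.
Proof. by move=> iT; rewrite !ffunE (negbTE iT) subn0. Qed.

Lemma msupp_ind S : msupp (mind S) = S.
Proof. by apply/setP => i; rewrite !inE ffunE; case: (i \in S). Qed.

Lemma sqfree_ind S : sqfree (mind S).
Proof. by apply/forallP => i; rewrite ffunE; case: (i \in S). Qed.

Lemma eq_ind_sqfree k S : sqfree k -> (k == mind S) = (S == msupp k).
Proof.
move=> /forallP k_le1; apply/eqP/eqP => [->|->]; first by rewrite msupp_ind.
by apply/ffunP => i; rewrite ffunE inE; have := k_le1 i; case: (k i) => [|[|]].
Qed.

Lemma msupp_eq0 k : (msupp k == set0) = (k == mzero).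
Proof.
apply/eqP/eqP => [supp0 | ->]; last by apply/setP => i; rewrite !inE ffunE.
apply/ffunP => i; rewrite ffunE; apply/eqP; rewrite -leqn0 leqNgt.
by apply/negP => ki; have := in_set0 i; rewrite -supp0 inE ki.
Qed.

Lemma msub_unit_eq k a i :
  (0 < k i) && (msub k (munit i) == a) = (k == [ffun j => a j + (j == i)]).
Proof.
apply/andP/eqP => [[ki /eqP <-] | ->]; last first.
  rewrite !ffunE eqxx addn1; split => //; apply/eqP/ffunP => j.
  by rewrite !ffunE addnK.
by apply/ffunP => j; rewrite !ffunE; have [->|_] := eqVneq j i; rewrite ?subnK ?subn0 ?addn0.
Qed.

End MultiIndices.

Section Coefficients.
Variable m : nat.
Implicit Types (f g h : fps m) (k a e : multi m) (S : {set 'I_m}).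
Local Open Scope ring_scope.

Lemma coef_fps_one k : fps_one m k = (k == mzero m)%:R.
Proof. by []. Qed.

Lemma coef_big_add (I : Type) (r : seq I) (P : pred I) (F : I -> fps m) k :
  (\big[@fps_add m/fps_zero m]_(x <- r | P x) F x) k = \sum_(x <- r | P x) F x k.
Proof. exact: (big_morph (fun f : fps m => f k)). Qed.

Lemma coef_fps_mulDl f g h k :
  fps_mul (fps_add f g) h k = fps_mul f h k + fps_mul g h k.
Proof. by rewrite /fps_mul -big_split; apply: eq_bigr => j _; rewrite /fps_add mulrDl. Qed.

Lemma coef_fps_mul_mono a f k :
  fps_mul (fps_mono a) f k = if mle a k then f (msub k a) else 0.
Proof.
rewrite /fps_mul /fps_mono; case: ifP => [/forallP a_le_k | a_nle_k]; last first.
  rewrite big1 // => j /forallP j_le_k; case: eqP; rewrite ?mul0r // => ja.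
  by move/negP: a_nle_k; case; apply/forallP => i; rewrite -ja ffunE.
pose ja : {ffun 'I_m -> 'I_(mdeg k).+1} := [ffun i => inord (a i)].
have jaE i : (ja i : nat) = a i.
  by rewrite ffunE inordK // ltnS (leq_trans (a_le_k i)) ?leq_mdeg.
clearbody ja; rewrite (bigD1 ja) /=; last by apply/forallP => i; rewrite jaE.
have -> : [ffun i => (ja i : nat)] = a by apply/ffunP => i; rewrite ffunE jaE.
rewrite eqxx mul1r big1 ?addr0.
  by congr f; apply/ffunP => i; rewrite !ffunE jaE.
move=> j /andP[_ /eqP j_ne_ja]; case: eqP; rewrite ?mul0r // => ja_eq.
by case: j_ne_ja; apply/ffunP => i; apply: ord_inj; rewrite jaE -ja_eq ffunE.
Qed.

Lemma coef_fps_mul_sqfree f g k : (forall e, ~~ sqfree e -> g e = 0) ->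
  fps_mul f g k =
  \sum_(S : {set 'I_m} | S \subset msupp k) f (msub k (mind S)) * g (mind S).
Proof.
move=> g_sqfree; rewrite /fps_mul.
rewrite (bigID (fun j : {ffun 'I_m -> 'I_(mdeg k).+1} => [forall i, k i - j i <= 1]%N)) /=.
rewrite [X in _ + X]big1 ?addr0; last first.
  move=> j /andP[_ not_le1]; rewrite g_sqfree ?mulr0 //.
  by apply: contra not_le1 => /forallP le1; apply/forallP => i; have := le1 i; rewrite ffunE.
pose jS S : {ffun 'I_m -> 'I_(mdeg k).+1} := [ffun i => inord (k i - (i \in S))].
have jSE S i : (jS S i : nat) = (k i - (i \in S))%N.
  by rewrite ffunE inordK // ltnS (leq_trans (leq_subr _ _)) ?leq_mdeg.
clearbody jS.
(* j <= k with k - j squarefree is k - 1_S for S = [set i | j i < k i]. *)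
rewrite (reindex_onto jS (fun j => [set i | j i < k i]%N)); last first.
  move=> j /andP[/forallP le /forallP le1]; apply/ffunP => i; apply: ord_inj.
  by rewrite jSE inE; have := le i; have := le1 i; case: ltnP => /=; lia.
rewrite [LHS](eq_bigl (fun S => S \subset msupp k)) => [|S /=]; last first.
  rewrite (_ : [forall i, jS S i <= k i]%N); last by apply/forallP => i; rewrite jSE leq_subr.
  rewrite (_ : [forall i, k i - jS S i <= 1]%N); last by apply/forallP => i; rewrite jSE; lia.
  apply/eqP/subsetP => [<- i | SU]; first by rewrite !inE jSE; case: (i \in S) => /=; lia.
  apply/setP => i; rewrite inE jSE; case iS: (i \in S); last by rewrite subn0 ltnn.
  by have := SU i iS; rewrite inE; lia.
apply: eq_bigr => S SU; congr (f _ * g _); apply/ffunP => i; rewrite !ffunE jSE //.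
case iS: (i \in S) => /=; last by rewrite subn0 subnn.
by have := subsetP SU i iS; rewrite inE; lia.
Qed.

Lemma coef_fps_mul_var i f k :
  fps_mul (fps_var i) f k = if (0 < k i)%N then f (msub k (munit i)) else 0.
Proof. by rewrite coef_fps_mul_mono mle_unit. Qed.

Lemma coef_prod_var_seq (r : seq 'I_m) k : uniq r ->
  (\big[@fps_mul m/fps_one m]_(i <- r) fps_var i) k
   = (k == [ffun j => nat_of_bool (j \in r)])%:R.
Proof.
elim: r k => [|x r IHr] k /=.
  have -> : [ffun j => nat_of_bool (j \in [::])] = mzero m by apply/ffunP => j; rewrite !ffunE.
  by rewrite big_nil.
case/andP => x_notin_r uniq_r; rewrite big_cons coef_fps_mul_var.
have -> : [ffun j => nat_of_bool (j \in x :: r)]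
        = [ffun j => [ffun j => nat_of_bool (j \in r)] j + (j == x)].
  apply/ffunP => j; rewrite !ffunE in_cons.
  by have [->|_] := eqVneq j x; rewrite ?eqxx ?(negbTE x_notin_r) //; case: (j \in r).
by rewrite -msub_unit_eq IHr //; case: (0 < k x)%N.
Qed.

Lemma coef_prod_var S k :
  (\big[@fps_mul m/fps_one m]_(i in S) fps_var i) k = (k == mind S)%:R.
Proof.
rewrite -big_filter coef_prod_var_seq ?filter_uniq ?index_enum_uniq //.
by congr (_ == _)%:R; apply/ffunP => j; rewrite !ffunE mem_filter mem_index_enum andbT.
Qed.

Lemma coef_numer_seq (r : seq 'I_m) k : uniq r ->
  (\big[@fps_mul m/fps_one m]_(i <- r) fps_add (fps_one m) (fps_var i)) k
   = [forall i, k i <= (i \in r)]%N%:R.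
Proof.
elim: r k => [|x r IHr] k /=.
  move=> _; rewrite big_nil coef_fps_one eq_multiE; congr (_%:R); congr nat_of_bool.
  by apply: eq_forallb => i; rewrite ffunE leqn0.
case/andP => x_notin_r uniq_r.
rewrite big_cons coef_fps_mulDl coef_fps_mul_mono coef_fps_mul_var !IHr //.
rewrite (_ : mle _ _); last by apply/forallP => i; rewrite ffunE.
rewrite (_ : msub k (mzero m) = k); last by apply/ffunP => i; rewrite !ffunE subn0.
pose at_x P := forall_split_at (i := x) (P := P) (Q := fun i => k i <= (i \in r))%N.
rewrite (at_x (fun i => k i <= (i \in r))%N) //.
rewrite (at_x (fun i => k i <= (i \in x :: r))%N); last first.
  by move=> i /negbTE ix; rewrite in_cons ix.
rewrite (at_x (fun i => msub k (munit x) i <= (i \in r))%N); last first.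
  by move=> i /negbTE ix; rewrite !ffunE ix subn0.
rewrite (negbTE x_notin_r) in_cons eqxx !ffunE eqxx /=.
by case: [forall i, _]; case: (k x) => [|[|n]]; rewrite /= ?addr0 ?add0r.
Qed.

Lemma coef_numer k : numer m k = (sqfree k)%:R.
Proof.
rewrite /numer coef_numer_seq ?index_enum_uniq //.
by congr (_%:R); congr nat_of_bool; apply: eq_forallb => i; rewrite mem_index_enum.
Qed.

Lemma sum_card_eq_ind e l :
  \sum_(S : {set 'I_m} | #|S| == l) ((e == mind S)%:R : int) =
  (sqfree e && (l == #|msupp e|))%:R.
Proof.
have [e_sqfree | e_not_sqfree] /= := boolP (sqfree e); last first.
  rewrite big1 // => S _; case: eqP => // eS.
  by rewrite eS sqfree_ind in e_not_sqfree.
under eq_bigr => S _ do rewrite eq_ind_sqfree //.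
have [-> | l_ne] := eqVneq l #|msupp e|.
  by rewrite (bigD1 (msupp e)) //= eqxx big1 ?addr0 // => S /andP[_ /negbTE ->].
rewrite big1 // => S /eqP cardS; case: eqP => // SE.
by move: l_ne; rewrite -cardS SE eqxx.
Qed.

Lemma coef_R_series e :
  R_series m e = if sqfree e then 1 - 2 * #|msupp e|%:R else 0.
Proof.
rewrite /R_series {1}/fps_add {1}/fps_scale coef_big_add.
under eq_bigr => l _ do rewrite /fps_scale coef_big_add.
under eq_bigr => l _ do under eq_bigr => S _ do rewrite coef_prod_var.
under eq_bigr => l _ do rewrite sum_card_eq_ind.
rewrite coef_fps_one.
have [e_sqfree | e_not_sqfree] /= := boolP (sqfree e); last first.
  rewrite big1 => [|l _]; last by rewrite mulr0.
  rewrite mulr0 addr0; case: eqP => // e0.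
  by case/negP: e_not_sqfree; apply/forallP => i; rewrite e0 ffunE.
rewrite -msupp_eq0 -cards_eq0.
under eq_bigr => l _ do rewrite mulr_natr mulrb.
rewrite -big_mkcond big_nat1_eq.
have := max_card (msupp e); rewrite card_ord.
case: #|msupp e| => [|c] c_le_m /=; rewrite ?mulr0 ?addr0 //.
rewrite ltnS c_le_m add0r mulnS subn1 addSn /= -[c.+1]addn1 !natrD.
ring.
Qed.
End Coefficients.

Lemma sum_tupleS (T : finType) n (F : seq T -> nat) :
  \sum_(w : n.+1.-tuple T) F w = \sum_(x : T) \sum_(w : n.-tuple T) F (x :: w).
Proof.
rewrite pair_big /= (reindex (fun p : T * n.-tuple T => [tuple of p.1 :: p.2])) /=.
  by apply: eq_bigr => -[x w].
exists (fun w : n.+1.-tuple T => (thead w, [tuple of behead w])).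
  by move=> [x w] _ /=; congr pair; apply: val_inj.
by move=> w _; case/tupleP: w => x w /=; apply: val_inj.
Qed.

Section ReducedWords.
Variable m : nat.
Implicit Types (x : letter m) (w : seq (letter m)) (k : multi m) (i : 'I_m).

Definition occs w : multi m := [ffun i => occ i w].
Definition starts_with w i := if w is x :: _ then x.1 == i else false.
Definition cancels x y := (x.1 == y.1) && (x.2 != y.2).
Definition prependable x w := if w is y :: _ then ~~ cancels x y else true.

Lemma reduced_cons x w : reduced (x :: w) = prependable x w && reduced w.
Proof. by case: w. Qed.

Lemma occs_cons x w k :
  (occs (x :: w) == k) = (0 < k x.1) && (msub k (munit x.1) == occs w).
Proof.
rewrite msub_unit_eq eq_sym; congr (k == _).
by apply/ffunP => j; rewrite !ffunE /occ /= addnC eq_sym.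
Qed.

Lemma prependable_count i w :
  prependable (i, true) w + prependable (i, false) w + starts_with w i = 2.
Proof.
case: w => [|[j s] w] //=; rewrite /cancels /= eq_sym.
by case: (j == i); case: s.
Qed.

Definition card_reduced n k :=
  \sum_(w : n.-tuple (letter m)) (reduced w && (occs w == k)).
Definition card_reduced_starting i n k :=
  \sum_(w : n.-tuple (letter m)) [&& reduced w, occs w == k & starts_with w i].

Lemma card_reduced0 k : card_reduced 0 k = (k == mzero m).
Proof.
rewrite /card_reduced (big_pred1 [tuple]) => [|w]; last first.
  by apply/esym/eqP/val_inj; case: w => -[].
by congr nat_of_bool; rewrite /= eq_sym; congr (_ == _); apply/ffunP => i; rewrite !ffunE.
Qed.

Lemma card_reducedS n k : card_reduced n.+1 k = \sum_i card_reduced_starting i n.+1 k.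
Proof.
rewrite /card_reduced /card_reduced_starting exchange_big /=; apply: eq_bigr => w _.
case/tupleP: w => x w /=; rewrite (bigD1 x.1) //= eqxx andbT big1 ?addn0 // => j.
by rewrite eq_sym => /negbTE ne; rewrite ne !andbF.
Qed.

Lemma card_reduced_starting_eq0 i n k : k i = 0 -> card_reduced_starting i n k = 0.
Proof.
move=> ki0; rewrite /card_reduced_starting big1 // => -[[|x w] /= _]; rewrite ?andbF //.
case: (x.1 =P i) => [xi|_]; last by rewrite !andbF.
by rewrite occs_cons xi ki0 andbF.
Qed.

Lemma card_reduced_startingS i n k : 0 < k i ->
  card_reduced_starting i n.+1 k + card_reduced_starting i n (msub k (munit i))
  = 2 * card_reduced n (msub k (munit i)).
Proof.
move=> ki; rewrite /card_reduced_starting /card_reduced.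
rewrite (sum_tupleS _ (fun w => [&& reduced w, occs w == k & starts_with w i])).
have sum_letter (G : letter m -> nat) : \sum_x G x = \sum_j \sum_(s : bool) G (j, s).
  by rewrite pair_big; apply: eq_bigr => -[].
rewrite sum_letter (bigD1 i) // [X in _ + X + _]big1 ?addn0 => [|j ji]; last first.
  by apply: big1 => s _; apply: big1 => w _; rewrite /= (negbTE ji) !andbF.
rewrite big_bool big_distrr -!big_split; apply: eq_bigr => w _.
rewrite !reduced_cons !occs_cons /= ki eqxx !andbT [occs w == _]eq_sym.
have := prependable_count i w.
by case: (reduced w); case: (_ == occs w); rewrite ?andbT ?andbF.
Qed.

Definition delta k := card_reduced (mdeg k) k.
Definition delta_starting i k := card_reduced_starting i (mdeg k) k.

Lemma delta_split k : delta k = (k == mzero m) + \sum_i delta_starting i k.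
Proof.
rewrite /delta /delta_starting -mdeg_eq0; case: (mdeg k) (mdeg_eq0 k) => [|n] deg0.
  have k0 : k = mzero m by apply/eqP; rewrite -deg0.
  rewrite card_reduced0 k0 eqxx big1 // => i _.
  by apply: card_reduced_starting_eq0; rewrite ffunE.
by rewrite card_reducedS.
Qed.

Lemma delta_startingS i k : 0 < k i ->
  delta_starting i k + delta_starting i (msub k (munit i)) = 2 * delta (msub k (munit i)).
Proof. by move=> ki; rewrite /delta_starting /delta (mdeg_msub_unit ki) card_reduced_startingS. Qed.

End ReducedWords.

Lemma sum_card_mul (T : finType) (A : {set T}) (F : {set T} -> nat) :
  \sum_(S : {set T} | S \subset A) #|S| * F S =
  \sum_t \sum_(S : {set T} | (S \subset A) && (t \in S)) F S.
Proof.
rewrite [RHS](exchange_big_dep (fun S : {set T} => S \subset A)) => [|t S _ /andP[] //].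
apply: eq_bigr => S SA; rewrite -sum_nat_const.
by apply: eq_bigl => t; rewrite SA.
Qed.

Lemma big_subset_in_setU1 (R : Type) (idx : R) (op : Monoid.com_law idx)
    (T : finType) (A : {set T}) t (F : {set T} -> R) : t \in A ->
  \big[op/idx]_(S : {set T} | (S \subset A) && (t \in S)) F S =
  \big[op/idx]_(S : {set T} | (S \subset A) && (t \notin S)) F (t |: S).
Proof.
move=> tA; rewrite (reindex_onto (fun S => t |: S) (fun S => S :\ t)); last first.
  by move=> S /andP[_ tS]; rewrite setD1K.
apply: eq_bigl => S; rewrite setU11 andbT subUset sub1set tA /=.
congr (_ && _); apply/eqP/idP => [<- | tS]; last exact: setU1K.
by rewrite !inE eqxx.
Qed.

Section SubsetSums.
Variables (m : nat) (k : multi m).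
Implicit Types (S : {set 'I_m}) (i : 'I_m).

Lemma sum_subsets_msub_eq0 :
  \sum_(S : {set 'I_m} | S \subset msupp k) (msub k (mind S) == mzero m) = sqfree k.
Proof.
rewrite (bigD1 (msupp k)) //= big1 ?addn0 => [|S /andP[SU S_ne]]; last first.
  have /subsetPn[i] : ~~ (msupp k \subset S) by rewrite eqEsubset SU in S_ne.
  rewrite inE => ki iS; apply/eqP; rewrite eqb0; apply: contraTneq ki => /ffunP/(_ i).
  by rewrite !ffunE (negbTE iS) subn0 => ->.
congr nat_of_bool; rewrite eq_multiE; apply: eq_forallb => i.
by rewrite !ffunE inE; case: (k i) => [|[|n]].
Qed.

Lemma sum_delta_starting i :
  \sum_(S : {set 'I_m} | S \subset msupp k) delta_starting i (msub k (mind S)) =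
  2 * \sum_(S : {set 'I_m} | (S \subset msupp k) && (i \in S)) delta (msub k (mind S)).
Proof.
have [ki0 | ki] := posnP (k i).
  rewrite big1 => [|S _]; last first.
    by rewrite /delta_starting card_reduced_starting_eq0 // !ffunE ki0.
  by rewrite big1 // => S /andP[/subsetP SU /SU]; rewrite inE ki0.
have iU : i \in msupp k by rewrite inE.
rewrite (bigID (fun S => i \in S)) /= !big_subset_in_setU1 // big_distrr -big_split /=.
apply: eq_bigr => T /andP[_ iT].
by rewrite -msub_indU1 // addnC delta_startingS // msub_ind_notin.
Qed.

Lemma sum_delta_subsets :
  \sum_(S : {set 'I_m} | S \subset msupp k) delta (msub k (mind S)) =
  2 * \sum_(S : {set 'I_m} | S \subset msupp k) #|S| * delta (msub k (mind S))
  + sqfree k.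
Proof.
rewrite sum_card_mul big_distrr /=.
rewrite (eq_bigr (fun i => \sum_(S : {set 'I_m} | S \subset msupp k)
                             delta_starting i (msub k (mind S)))) => [|i _]; last first.
  by rewrite sum_delta_starting.
rewrite exchange_big /= -sum_subsets_msub_eq0 addnC -big_split /=.
by apply: eq_bigr => S _; rewrite delta_split.
Qed.
End SubsetSums.

Local Open Scope ring_scope.

Lemma coef_Delta m (k : multi m) : Delta m k = (delta k)%:R.
Proof.
rewrite /Delta /delta /card_reduced cardsE -sum1_card big_mkcond /=; congr _%:R.
apply: eq_bigr => w _; rewrite unfold_in /= eq_multiE.
rewrite (eq_forallb (fun i => congr1 (eq_op^~ _) (ffunE _ i))).
by case: (_ && _).
Qed.

Lemma coef_mul_Delta_R m (k : multi m) :
  fps_mul (Delta m) (R_series m) k =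
  \sum_(S : {set 'I_m} | S \subset msupp k)
     (delta (msub k (mind S)))%:R * (1 - 2 * #|S|%:R).
Proof.
rewrite coef_fps_mul_sqfree => [|e]; last by rewrite coef_R_series => /negbTE ->.
by apply: eq_bigr => S _; rewrite coef_Delta coef_R_series sqfree_ind msupp_ind.
Qed.

Theorem proposition2 (m : nat) (hm : (2 <= m)%N) :
  forall k : multi m, fps_mul (Delta m) (R_series m) k = numer m k.
Proof.
move=> k; rewrite coef_mul_Delta_R coef_numer.
under eq_bigr => S _ do rewrite mulrBr mulr1 mulrCA -natrM mulnC.
by rewrite sumrB -mulr_sumr -!natr_sum sum_delta_subsets natrD natrM addrAC subrr add0r.
Qed.
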